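(* Let $k$ be a field, $D$ a $k$-algebra, $\sigma$ an automorphism of $D$, $a$ a central element of $D$, $A=D(x,y;\sigma,a)$ the generalized Weyl algebra, $m\geq1$ an integer, and $B$ the subalgebra of $A$ generated by $D\cup\{x^m,y^m\}$. Put $b=\sigma^{-(m-1)}(a)\sigma^{-(m-2)}(a)\cdots\sigma^{-1}(a)a$. Then $b$ is central in $D$, $B$ is the generalized Weyl algebra $D(x^m,y^m;\sigma^m,b)$ (with $x^m,y^m$ playing the roles of its canonical generators), and $\operatorname{GKdim}(A)=\operatorname{GKdim}(B)$.
   Context: $D(x,y;\sigma,a)$ denotes the algebra generated by $D$ and indeterminates $x,y$ subject to $xd=\sigma(d)x$, $yd=\sigma^{-1}(d)y$ for all $d\in D$, $yx=a$, $xy=\sigma(a)$. $\operatorname{GKdim}(C)=\sup_V\limsup_{n\to\infty}\log_n\dim_k(\sum_{i=0}^nV^i)$ over finite-dimensional subspaces $V$ of $C$. *)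

From HB Require Import structures.
From mathcomp Require Import all_boot all_order all_algebra.
From mathcomp Require Import all_classical all_reals all_analysis.
Set Implicit Arguments. Unset Strict Implicit. Unset Printing Implicit Defensive.
Import Order.TTheory GRing.Theory Num.Theory.
Local Open Scope ring_scope.

Section GWA.
Variable k : fieldType.

(* Relations of D(x,y;s,a) inside A, where iota : D -> A is the structure map,
   s an automorphism of D with inverse s'. *)
Definition gwa_relations (D A : algType k) (iota : D -> A) (s s' : D -> D)
    (a : D) (x y : A) : Prop :=
  [/\ forall d, x * iota d = iota (s d) * x,
      forall d, y * iota d = iota (s' d) * y,
      y * x = iota a
    & x * y = iota (s a)].

(* (A, iota, x, y) is THE generalized Weyl algebra D(x,y;s,a): the k-algebra
   generated by D and x, y subject to the relations, i.e. it is initial among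
   k-algebras receiving a k-algebra map from D and two elements satisfying
   the relations. *)
Definition is_GWA (D A : algType k) (iota : {lrmorphism D -> A})
    (s s' : D -> D) (a : D) (x y : A) : Prop :=
  gwa_relations iota s s' a x y /\
  forall (C : algType k) (phi : {lrmorphism D -> C}) (X Y : C),
    gwa_relations phi s s' a X Y ->
    exists f : {lrmorphism A -> C},
      [/\ forall d, f (iota d) = phi d, f x = X, f y = Y &
          forall g : {lrmorphism A -> C},
            (forall d, g (iota d) = phi d) -> g x = X -> g y = Y ->
            forall z, g z = f z].

Definition subalg_closed (A : algType k) (S : A -> Prop) : Prop :=
  [/\ S 1, (forall u v, S u -> S v -> S (u + v)),
      (forall u v, S u -> S v -> S (u * v)) &
      (forall (c : k) u, S u -> S (c *: u))].

Definition gen_subalg (A : algType k) (G : A -> Prop) : A -> Prop :=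
  fun z => forall S : A -> Prop, subalg_closed S -> (forall g, G g -> S g) -> S z.

Definition spanned (A : algType k) (s : seq A) (z : A) : Prop :=
  exists c : 'I_(size s) -> k, z = \sum_(i < size s) c i *: s`_i.

Lemma fdim_ex (A : algType k) (s : seq A) :
  exists n, `[< exists t : seq A, size t = n /\
                 forall z, spanned s z <-> spanned t z >].
Proof. by exists (size s); apply/asboolP; exists s. Qed.

(* dimension of the span of s = least size of a spanning family *)
Definition fdim (A : algType k) (s : seq A) : nat := ex_minn (fdim_ex s).

Fixpoint words (A : Type) (vs : seq A) (i : nat) : seq (seq A) :=
  if i is i'.+1 then [seq v :: w | v <- vs, w <- words vs i'] else [:: [::]].

(* a spanning family of V^0 + V^1 + ... + V^n, where V = span vs *)
Definition powfam (A : algType k) (vs : seq A) (n : nat) : seq A :=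
  [seq foldr *%R 1 w | w <- flatten [seq words vs i | i <- iota 0 n.+1]].

Definition growth (A : algType k) (vs : seq A) (n : nat) : nat :=
  fdim (powfam vs n).

Definition GKdim_on (R : realType) (A : algType k) (S : A -> Prop) : \bar R :=
  ereal_sup [set limn_esup (fun n : nat =>
                 ((ln ((growth vs n)%:R : R) / ln (n%:R : R))%:E))
            | vs in [set vs : seq A | forall v, v \in vs -> S v]].

Definition GKdim (R : realType) (A : algType k) : \bar R :=
  GKdim_on R (fun _ : A => True).

End GWA.

From Pilot Require Import Defs.
From HB Require Import structures.
From mathcomp Require Import all_boot all_order all_algebra.
From mathcomp Require Import all_classical all_reals all_analysis.
From mathcomp Require Import zify.
Set Implicit Arguments. Unset Strict Implicit. Unset Printing Implicit Defensive.
Import Order.TTheory GRing.Theory Num.Theory.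
Local Open Scope ring_scope.

(* The relations of D(x,y;sigma,a) give x^m d = sigma^m(d) x^m,
   y^m d = sigma^-m(d) y^m, y^m x^m = b and x^m y^m = sigma^m(b), so the
   universal property of A' = D(X,Y;sigma^m,b) yields a map f : A' -> A onto
   B.  Every generalized Weyl algebra acts faithfully on D[t] (+) D[t], the
   free left D-module on the monomials x^i, y^(i+1); so these monomials form a
   left D-basis, and as f maps d X^i and d Y^(i+1) to d x^(mi) and
   d y^(m(i+1)), it is injective.  Finally A = sum_(r<m) (x^r B + y^r B) is a
   finitely generated right B-module with 1 among its generators z_r: every
   V^n then lies in sum_r z_r W^n for a finite W in B, the growth functions
   differ by at most a constant factor, and the GK dimensions agree. *)

Definition central (R : pzSemiRingType) (z : R) := forall d : R, GRing.comm z d.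

Lemma central_rmorph_can (R : nzRingType) (f : {rmorphism R -> R}) g :
  cancel g f -> forall z, central z -> central (f z).
Proof. by move=> gK z zC d; rewrite /GRing.comm -[d]gK -!rmorphM zC. Qed.

Lemma iter_can (T : Type) (f g : T -> T) n : cancel f g -> cancel (iter n f) (iter n g).
Proof. by move=> fK; elim: n => // n IHn u; rewrite iterSr iterS fK IHn. Qed.

(** * Subalgebras generated by a set *)

Section GeneratedSubalgebra.
Variables (k : fieldType) (A : algType k) (G : A -> Prop).

Lemma gen_subalg_closed : Defs.subalg_closed (gen_subalg G).
Proof.
split=> [S [] //|u v Su Sv|u v Su Sv|c u Su] S SS GS; case: (SS) => _ SD SM SZ.
- by apply: SD; [apply: Su|apply: Sv].
- by apply: SM; [apply: Su|apply: Sv].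
- by apply: SZ; apply: Su.
Qed.

Lemma gen_subalg_gen g : G g -> gen_subalg G g.
Proof. by move=> Gg S _; apply. Qed.

Definition gen_subalg_pred : pred A := fun z => `[< gen_subalg G z >].

Fact gen_subalg_pred_closed : GRing.subsemialg_closed gen_subalg_pred.
Proof.
have [S1 SD SM SZ] := gen_subalg_closed.
have S0 : gen_subalg G 0 by rewrite -(scale0r 1); apply: SZ.
split; [exact/asboolP|split; first exact/asboolP| |].
- by move=> u v /asboolP Su /asboolP Sv; apply/asboolP; apply: SD.
- by move=> c u /asboolP Su; apply/asboolP; apply: SZ.
- by move=> u v /asboolP Su /asboolP Sv; apply/asboolP; apply: SM.
Qed.

Record gen_subalg_type := GenSubalg {
  gen_subalg_val : A; _ : gen_subalg_pred gen_subalg_val }.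
HB.instance Definition _ := [isSub for gen_subalg_val].
HB.instance Definition _ := [Choice of gen_subalg_type by <:].
HB.instance Definition _ := GRing.SubChoice_isSubAlgebra.Build k A
  gen_subalg_pred gen_subalg_type gen_subalg_pred_closed.

Definition gen_subalg_valL : {lrmorphism gen_subalg_type -> A} :=
  HB.pack (val : gen_subalg_type -> A)
    (GRing.isZmodMorphism.Build _ _ _ (@GRing.valB _ _ _))
    (GRing.isMonoidMorphism.Build _ _ _ (GRing.valM1 _))
    (GRing.isScalable.Build _ _ _ _ _ (@GRing.valZ _ _ _ _)).

End GeneratedSubalgebra.

Lemma gen_subalg_lrmorph_image (k : fieldType) (A' A : algType k)
    (f : {lrmorphism A' -> A}) (G' : A' -> Prop) (G : A -> Prop) :
  (forall w, gen_subalg G' w) -> (forall g, G' g -> G (f g)) ->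
  (forall z, G z -> exists w, f w = z) ->
  forall z, gen_subalg G z <-> exists w, f w = z.
Proof.
move=> genA' G'G GG' z.
have image_closed : Defs.subalg_closed (fun z => exists w, f w = z).
  split=> [|_ _ [u <-] [v <-]|_ _ [u <-] [v <-]|c _ [u <-]].
  - by exists 1; rewrite rmorph1.
  - by exists (u + v); rewrite rmorphD.
  - by exists (u * v); rewrite rmorphM.
  - by exists (c *: u); rewrite linearZ.
have preimage_closed : Defs.subalg_closed (fun w => gen_subalg G (f w)).
  have [G1 GD GM GZ] := gen_subalg_closed G.
  split=> [|u v Gu Gv|u v Gu Gv|c u Gu]; rewrite ?rmorph1 ?rmorphD ?rmorphM ?linearZ //.
  - exact: GD.
  - exact: GM.
  - exact: GZ.
split=> [Gz|[w <-]]; first exact: Gz _ image_closed GG'.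
by apply: genA' preimage_closed _ => g /G'G /gen_subalg_gen.
Qed.

(** * Linear endomorphisms of a module *)

Section LinearEndomorphisms.
Variables (R : comPzRingType) (V : lmodType R).

Record lendo := LEndo { lendo_fun :> V -> V; lendo_linear : linear lendo_fun }.

HB.instance Definition _ (f : lendo) :=
  GRing.isLinear.Build R V V *:%R (lendo_fun f) (lendo_linear f).
HB.instance Definition _ := gen_eqMixin lendo.
HB.instance Definition _ := gen_choiceMixin lendo.

Lemma lendoP (f g : lendo) : f =1 g -> f = g.
Proof.
case: f g => f lf [g lg] /= /funext fg; subst g.
by congr LEndo; apply: Prop_irrelevance.
Qed.

Fact lendo0_linear : linear (fun _ : V => 0 : V).
Proof. by move=> a u v; rewrite scaler0 addr0. Qed.
Fact lendo_add_linear (f g : lendo) : linear (fun u => f u + g u).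
Proof. by move=> a u v; rewrite !linearP scalerDr addrACA. Qed.
Fact lendo_opp_linear (f : lendo) : linear (fun u => - f u).
Proof. by move=> a u v; rewrite linearP opprD scalerN. Qed.
Fact lendo1_linear : linear (@id V). Proof. by []. Qed.
Fact lendo_mul_linear (f g : lendo) : linear (fun u => f (g u)).
Proof. by move=> a u v; rewrite !linearP. Qed.
Fact lendo_scale_linear c (f : lendo) : linear (fun u => c *: f u).
Proof. by move=> a u v; rewrite linearP scalerDr !scalerA mulrC. Qed.

Definition lendo0 := LEndo lendo0_linear.
Definition lendo_add f g := LEndo (lendo_add_linear f g).
Definition lendo_opp f := LEndo (lendo_opp_linear f).
Definition lendo1 := LEndo lendo1_linear.
Definition lendo_mul f g := LEndo (lendo_mul_linear f g).
Definition lendo_scale c f := LEndo (lendo_scale_linear c f).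

Fact lendo_addA : associative lendo_add.
Proof. by move=> f g h; apply: lendoP => u /=; rewrite addrA. Qed.
Fact lendo_addC : commutative lendo_add.
Proof. by move=> f g; apply: lendoP => u /=; rewrite addrC. Qed.
Fact lendo_add0l : left_id lendo0 lendo_add.
Proof. by move=> f; apply: lendoP => u /=; rewrite add0r. Qed.
Fact lendo_addN : left_inverse lendo0 lendo_opp lendo_add.
Proof. by move=> f; apply: lendoP => u /=; rewrite addNr. Qed.
HB.instance Definition _ :=
  GRing.isZmodule.Build lendo lendo_addA lendo_addC lendo_add0l lendo_addN.

Fact lendo_mulA : associative lendo_mul. Proof. by move=> f g h; apply: lendoP. Qed.
Fact lendo_mul1l : left_id lendo1 lendo_mul. Proof. by move=> f; apply: lendoP. Qed.
Fact lendo_mul1r : right_id lendo1 lendo_mul. Proof. by move=> f; apply: lendoP. Qed.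
Fact lendo_mulDl : left_distributive lendo_mul lendo_add.
Proof. by move=> f g h; apply: lendoP. Qed.
Fact lendo_mulDr : right_distributive lendo_mul lendo_add.
Proof. by move=> f g h; apply: lendoP => u /=; rewrite linearD. Qed.
HB.instance Definition _ := GRing.Zmodule_isPzRing.Build lendo
  lendo_mulA lendo_mul1l lendo_mul1r lendo_mulDl lendo_mulDr.

Fact lendo_scaleA a b f : lendo_scale a (lendo_scale b f) = lendo_scale (a * b) f.
Proof. by apply: lendoP => u /=; rewrite scalerA. Qed.
Fact lendo_scale1 : left_id 1 lendo_scale.
Proof. by move=> f; apply: lendoP => u /=; rewrite scale1r. Qed.
Fact lendo_scaleDr : right_distributive lendo_scale +%R.
Proof. by move=> c f g; apply: lendoP => u /=; rewrite scalerDr. Qed.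
Fact lendo_scaleDl f : {morph lendo_scale^~ f : a b / a + b}.
Proof. by move=> a b; apply: lendoP => u /=; rewrite scalerDl. Qed.
HB.instance Definition _ := GRing.Zmodule_isLmodule.Build R lendo
  lendo_scaleA lendo_scale1 lendo_scaleDr lendo_scaleDl.

Lemma lendo_scalerAl c (f g : lendo) : c *: (f * g) = (c *: f) * g.
Proof. by apply: lendoP. Qed.
Lemma lendo_scalerAr c (f g : lendo) : c *: (f * g) = f * (c *: g).
Proof. by apply: lendoP => u /=; rewrite linearZ. Qed.

Lemma lendo_sumE I (r : seq I) (F : I -> lendo) u :
  (\sum_(i <- r) F i) u = \sum_(i <- r) F i u.
Proof. by elim/big_rec2: _ => // i f g _ <-. Qed.

End LinearEndomorphisms.

(** * Growth and Gelfand-Kirillov dimension *)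

Section LogGrowth.
Variable R : realType.
Local Open Scope ereal_scope.

Definition log_growth (g : nat -> nat) : \bar R :=
  limn_esup (fun n => (ln (g n)%:R / ln n%:R : R)%:E).

Lemma le_limn_esup (u w : (\bar R)^nat) N :
  (forall n, (N <= n)%N -> u n <= w n) -> limn_esup u <= limn_esup w.
Proof.
move=> uw; rewrite !limn_esup_lim; apply: lee_lim; try exact: is_cvg_esups.
exists N => // n /= Nn; apply: ge_ereal_sup => _ [j /= nj <-].
apply: le_trans (uw _ (leq_trans Nn nj)) _.
by apply: ereal_sup_ubound; exists j.
Qed.

Lemma limn_esup_shift (u : (\bar R)^nat) (e : R) :
  limn_esup (fun n => e%:E + u n) = e%:E + limn_esup u.
Proof.
have esupE v : limn_esup v = - limn_einf (-%E \o v) by rewrite limn_einfN oppeK.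
rewrite esupE (_ : -%E \o _ = fun n => (- e)%:E + (-%E \o u) n); last first.
  by apply: funext => n /=; rewrite oppeD.
by rewrite limn_einf_shift // limn_einfN oppeD // EFinN !oppeK.
Qed.

Lemma log_growth_le (g h : nat -> nat) K :
  (forall n, 0 < h n)%N -> (forall n, g n <= K * h n)%N ->
  log_growth g <= log_growth h.
Proof.
move=> h_gt0 gh; set K' := K.+2.
have K'_gt1 : (1 < K')%N by [].
have ghK' n : (g n <= K' * h n)%N.
  by apply: leq_trans (gh n) _; rewrite leq_mul2r leqW ?orbT.
(* ln g_n / ln n <= ln K' / ln n + ln h_n / ln n, and ln K' / ln n <= e as
   soon as n >= K'^j. *)
apply/lee_addgt0Pr => e e_gt0; rewrite addeC -limn_esup_shift.
pose j := (Num.truncn e^-1).+1.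
have ej : (1 < e * j%:R)%R by rewrite -ltr_pdivrMl // mulr1 truncnS_gt.
apply: (le_limn_esup (N := K' ^ j)) => n le_n; rewrite lee_fin.
have n_gt1 : (1 < n)%N.
  apply: leq_trans le_n; apply: leq_trans K'_gt1 _.
  by rewrite -[X in (X <= _)%N](expn1 K') leq_pexp2l.
have lnn : (0 < ln (n%:R : R))%R by rewrite ln_gt0 // ltr1n.
have lnK' : (0 < ln (K'%:R : R))%R by rewrite ln_gt0 // ltr1n.
have lnKj : (ln (K'%:R : R) *+ j <= ln (n%:R : R))%R.
  rewrite -lnXn ?ltr0n // ler_ln ?posrE -?natrX ?ltr0n ?expn_gt0 ?ler_nat //; lia.
have lnK'_le : (ln (K'%:R : R) / ln n%:R <= e)%R.
  rewrite ler_pdivrMr //; apply: le_trans (ler_wpM2l (ltW e_gt0) lnKj).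
  by rewrite -[(_ *+ j)%R]mulr_natr mulrCA ler_peMr // ltW.
have ln_g : (ln (g n)%:R <= ln (K'%:R : R) + ln (h n)%:R)%R.
  case: (posnP (g n)) => [->|g_gt0].
    by rewrite ln0 // addr_ge0 // ln_ge0 // ler1n // h_gt0.
  rewrite -lnM ?posrE ?ltr0n ?h_gt0 //.
  by rewrite ler_ln ?posrE -?natrM ?ltr0n ?ler_nat ?ghK' // muln_gt0 h_gt0 andbT.
have lninv : (0 <= (ln (n%:R : R))^-1)%R by rewrite invr_ge0 ltW.
apply: le_trans (ler_wpM2r lninv ln_g) _.
by rewrite mulrDl lerD2r.
Qed.

End LogGrowth.

Section Span.
Variables (k : fieldType) (A : algType k).
Implicit Types (s t : seq A) (z u v : A).

Lemma spanned0 s : spanned s 0.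
Proof. by exists (fun _ => 0); rewrite big1 // => i _; rewrite scale0r. Qed.

Lemma spannedD s u v : spanned s u -> spanned s v -> spanned s (u + v).
Proof.
move=> [c ->] [c' ->]; exists (fun i => c i + c' i).
by rewrite -big_split; apply: eq_bigr => i _; rewrite scalerDl.
Qed.

Lemma spannedZ s c u : spanned s u -> spanned s (c *: u).
Proof.
move=> [c' ->]; exists (fun i => c * c' i).
by rewrite scaler_sumr; apply: eq_bigr => i _; rewrite scalerA.
Qed.

Lemma spannedB s u v : spanned s u -> spanned s v -> spanned s (u - v).
Proof. by move=> su sv; rewrite -scaleN1r; apply/spannedD/spannedZ. Qed.

Lemma spanned_sum s I (r : seq I) (F : I -> A) :
  (forall i, spanned s (F i)) -> spanned s (\sum_(i <- r) F i).
Proof.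
move=> sF; elim: r => [|i r IHr]; first by rewrite big_nil; apply: spanned0.
by rewrite big_cons; apply: spannedD.
Qed.

Lemma spanned_mem s v : v \in s -> spanned s v.
Proof.
move=> vs; pose i0 := Ordinal (etrans (index_mem v s) vs).
exists (fun j => (j == i0)%:R); rewrite (bigD1 i0) //= eqxx scale1r nth_index //.
by rewrite big1 ?addr0 // => j /negPf ->; rewrite scale0r.
Qed.

Lemma spanned_map s t (g : A -> A) z :
  {morph g : u v / u + v} -> (forall c, {morph g : u / c *: u}) ->
  (forall v, v \in s -> spanned t (g v)) -> spanned s z -> spanned t (g z).
Proof.
move=> gD gZ sgt [c ->]; have g0 : g 0 = 0 by have := gZ 0 0; rewrite !scale0r.
rewrite (big_morph g gD g0); apply: spanned_sum => i.
by rewrite gZ; apply/spannedZ/sgt/mem_nth.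
Qed.

Lemma spanned_trans s t z :
  (forall v, v \in s -> spanned t v) -> spanned s z -> spanned t z.
Proof. exact: (@spanned_map s t id). Qed.

Lemma spanned_catl s t z : spanned s z -> spanned (s ++ t) z.
Proof. by apply: spanned_trans => v vs; apply: spanned_mem; rewrite mem_cat vs. Qed.

Lemma spanned_catr s t z : spanned t z -> spanned (s ++ t) z.
Proof.
by apply: spanned_trans => v vt; apply: spanned_mem; rewrite mem_cat vt orbT.
Qed.

Lemma spanned_nil z : spanned [::] z -> z = 0.
Proof. by move=> [c ->]; rewrite big_ord0. Qed.

Lemma spanned_cons u t v : spanned (u :: t) v -> exists c, spanned t (v - c *: u).
Proof.
move=> [c ->]; exists (c ord0); rewrite big_ord_recl /= addrAC subrr add0r.
by exists (fun i => c (lift ord0 i)).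
Qed.

Lemma spanning_family_le t s : (forall v, v \in s -> spanned t v) ->
  exists t', (size t' <= size t)%N /\ forall z, spanned s z <-> spanned t' z.
Proof.
elim: t s => [|u t IHt] s st.
  exists [::]; split=> // z; split=> [sz|/spanned_nil ->]; last exact: spanned0.
  by rewrite (spanned_nil (spanned_trans st sz)); apply: spanned0.
(* Steinitz exchange: if some v0 in s is not in the span of t, eliminate u
   from all elements of s with the help of v0. *)
have [st1|] := pselect (forall v, v \in s -> spanned t v).
  by have [t' [le_t' st']] := IHt s st1; exists t'; split=> //; apply: leqW.
move=> /existsNP [v0 /not_implyP [v0s not_t_v0]].
have /choice [c cP] : forall v, exists c : k,
    spanned (u :: t) v -> spanned t (v - c *: u).
  move=> v; have [/spanned_cons [c tc]|nv] := pselect (spanned (u :: t) v).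
    by exists c.
  by exists 0 => /nv.
have c0_neq0 : c v0 != 0.
  apply: contra_notN not_t_v0 => /eqP c0.
  by move: (cP v0 (st v0 v0s)); rewrite c0 scale0r subr0.
pose proj v := v - (c v / c v0) *: v0.
have proj_t w : w \in map proj s -> spanned t w.
  move=> /mapP [v vs ->].
  have -> : proj v = (v - c v *: u) - (c v / c v0) *: (v0 - c v0 *: u).
    by rewrite /proj scalerBr scalerA divfK // opprB addrA subrK.
  by apply: spannedB; [exact/cP/st|exact/spannedZ/cP/st].
have [t' [le_t' st']] := IHt _ proj_t.
exists (v0 :: t'); split=> // z; split; apply: spanned_trans.
  move=> v vs; rewrite -[v](subrK ((c v / c v0) *: v0)); apply: spannedD.
    by rewrite -cat1s; apply/spanned_catr/st'/spanned_mem/map_f.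
  by apply/spannedZ/spanned_mem; rewrite inE eqxx.
move=> w; rewrite inE => /orP [/eqP ->|wt']; first exact: spanned_mem v0s.
apply: spanned_trans (proj2 (st' w) (spanned_mem wt')) => _ /mapP [v vs ->].
by apply: spannedB; [apply: spanned_mem | apply/spannedZ/spanned_mem].
Qed.

Lemma fdimP s : exists t, size t = fdim s /\ forall z, spanned s z <-> spanned t z.
Proof. by rewrite /fdim; case: ex_minnP => n /asboolP [t [st Et]] _; exists t. Qed.

Lemma fdim_le s t : (forall z, spanned s z <-> spanned t z) -> (fdim s <= size t)%N.
Proof.
by move=> st; rewrite /fdim; case: ex_minnP => n _; apply; apply/asboolP; exists t.
Qed.

Lemma fdim_size s : (fdim s <= size s)%N.
Proof. exact: fdim_le. Qed.

Lemma fdim_sub s t : (forall v, v \in s -> spanned t v) -> (fdim s <= fdim t)%N.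
Proof.
move=> st; have [t0 [<- tt0]] := fdimP t.
have [t' [le_t' st']] : exists t', (size t' <= size t0)%N /\
    forall z, spanned s z <-> spanned t' z.
  by apply: spanning_family_le => v vs; apply/tt0/st.
exact: leq_trans (fdim_le st') le_t'.
Qed.

Lemma fdim_cat s t : (fdim (s ++ t) <= fdim s + fdim t)%N.
Proof.
have [s0 [<- ss0]] := fdimP s; have [t0 [<- tt0]] := fdimP t.
rewrite -size_cat; apply: leq_trans (fdim_sub (t := s0 ++ t0) _) (fdim_size _).
move=> v; rewrite mem_cat => /orP [vs|vt].
  by apply/spanned_catl/ss0/spanned_mem.
by apply/spanned_catr/tt0/spanned_mem.
Qed.

Lemma fdim_map s (g : A -> A) :
  {morph g : u v / u + v} -> (forall c, {morph g : u / c *: u}) ->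
  (fdim (map g s) <= fdim s)%N.
Proof.
move=> gD gZ; have [t [<- st]] := fdimP s.
rewrite -(size_map g); apply: leq_trans (fdim_sub (t := map g t) _) (fdim_size _).
move=> _ /mapP [v vs ->]; apply: spanned_map gD gZ _ (proj1 (st v) (spanned_mem vs)).
by move=> w wt; apply/spanned_mem/map_f.
Qed.

Lemma fdim_flatten (ss : seq (seq A)) n :
  (forall s, s \in ss -> fdim s <= n)%N -> (fdim (flatten ss) <= size ss * n)%N.
Proof.
elim: ss => [|s ss IHss] le_n /=; first by rewrite (leq_trans (fdim_size _)).
rewrite mulSn (leq_trans (fdim_cat _ _)) // leq_add ?le_n ?mem_head //.
by apply: IHss => t tss; rewrite le_n // inE tss orbT.
Qed.

Lemma fdim_gt0 s : spanned s 1 -> (0 < fdim s)%N.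
Proof.
move=> s1; have [[|u t] [<- st]] := fdimP s => //.
by have /spanned_nil/eqP := proj1 (st 1) s1; rewrite oner_eq0.
Qed.

End Span.

Section Growth.
Variables (k : fieldType) (A : algType k).
Implicit Types (vs ws zs : seq A).

Lemma words_consP vs i (w : seq A) : w \in words vs i.+1 ->
  exists v w', [/\ v \in vs, w' \in words vs i & w = v :: w'].
Proof. by move=> /allpairsP [[v w'] /= [vvs w'w ->]]; exists v, w'. Qed.

Lemma words_cons vs i v (w : seq A) :
  v \in vs -> w \in words vs i -> v :: w \in words vs i.+1.
Proof. by move=> vvs ww; apply: (allpairs_f (fun v w => v :: w)). Qed.

Lemma mem_powfam vs n i (w : seq A) :
  (i <= n)%N -> w \in words vs i -> foldr *%R 1 w \in powfam vs n.
Proof.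
move=> le_in ww; apply/map_f/flattenP; exists (words vs i) => //.
by apply: map_f; rewrite mem_iota.
Qed.

Lemma powfamP vs n z : z \in powfam vs n ->
  exists i w, [/\ (i <= n)%N, w \in words vs i & z = foldr *%R 1 w].
Proof.
move=> /mapP [w /flattenP [wss /mapP [i]]]; rewrite mem_iota => le_in -> ww ->.
by exists i, w.
Qed.

Lemma growth_gt0 vs n : (0 < growth vs n)%N.
Proof. by apply/fdim_gt0/spanned_mem; apply: (@mem_powfam vs n 0 [::]). Qed.

Lemma growth_le_mul zs ws vs : 1 \in zs ->
  (forall v z, v \in vs -> z \in zs ->
    spanned [seq z' * w | z' <- zs, w <- ws] (v * z)) ->
  forall n, (growth vs n <= size zs * growth ws n)%N.
Proof.
move=> zs1 vz n.
(* By induction on i, V^i lies in the span of zs W^i. *)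
pose L i := [seq z * foldr *%R 1 u | z <- zs, u <- words ws i].
have words_L i w : w \in words vs i -> spanned (L i) (foldr *%R 1 w).
  elim: i w => [|i IHi] w.
    rewrite inE => /eqP -> /=; apply: spanned_mem.
    have -> : (1 : A) = 1 * foldr *%R 1 [::] by rewrite mulr1.
    by apply: (allpairs_f (fun z u => z * foldr *%R 1 u)) => //; rewrite inE.
  move=> /words_consP [v [w' [vvs w'w ->]]] /=.
  apply: spanned_map (IHi w' w'w) => [u u'|c u|_ /allpairsP [[z u] /= [zzs uw ->]]].
  - exact: mulrDr.
  - by rewrite scalerAr.
  rewrite mulrA; apply: (spanned_map (g := fun t => t * _)) (vz v z vvs zzs).
  - by move=> u1 u2; rewrite mulrDl.
  - by move=> c u1; rewrite scalerAl.
  move=> _ /allpairsP [[z' w0] /= [z'zs w0ws ->]]; apply: spanned_mem.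
  rewrite -mulrA -[w0 * _]/(foldr *%R 1 (w0 :: u)).
  exact: (allpairs_f (fun z u => z * foldr *%R 1 u)) z'zs (words_cons w0ws uw).
pose P := [seq [seq z * p | p <- powfam ws n] | z <- zs].
have powfam_P t : t \in powfam vs n -> spanned (flatten P) t.
  move=> /powfamP [i [w [le_in ww ->]]].
  apply: spanned_trans (words_L i w ww) => _ /allpairsP [[z u] /= [zzs uw ->]].
  apply/spanned_mem/flattenP; exists [seq z * p | p <- powfam ws n]; first exact: map_f.
  by apply/map_f/(mem_powfam le_in uw).
apply: leq_trans (fdim_sub powfam_P) _.
rewrite -(size_map (fun z => [seq z * p | p <- powfam ws n]) zs).
apply: fdim_flatten => _ /mapP [z _ ->]; apply: fdim_map => [u v|c u].
- exact: mulrDr.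
- by rewrite scalerAr.
Qed.

End Growth.

Section GKdimFiniteModule.
Variables (k : fieldType) (A : algType k) (R : realType).

Definition right_span (zs : seq A) (S : A -> Prop) (w : A) : Prop :=
  exists F : nat -> A, (forall j, S (F j)) /\ w = \sum_(j < size zs) zs`_j * F j.

Section RightSpan.
Variables (zs : seq A) (S : A -> Prop).
Hypothesis S_closed : Defs.subalg_closed S.

Let S0 : S 0.
Proof. by case: S_closed => S1 _ _ SZ; rewrite -(scale0r 1); apply: SZ. Qed.

Lemma right_spanD u v :
  right_span zs S u -> right_span zs S v -> right_span zs S (u + v).
Proof.
move=> [F [SF ->]] [G [SG ->]]; exists (fun j => F j + G j); split.
  by case: S_closed => _ SD _ _ j; apply: SD.
by rewrite -big_split; apply: eq_bigr => j _; rewrite mulrDr.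
Qed.

Lemma right_span_sum I (r : seq I) (F : I -> A) :
  (forall i, right_span zs S (F i)) -> right_span zs S (\sum_(i <- r) F i).
Proof.
move=> SF; elim: r => [|i r IHr]; last by rewrite big_cons; apply: right_spanD.
by rewrite big_nil; exists (fun=> 0); split=> //; rewrite big1 // => j; rewrite mulr0.
Qed.

Lemma right_span_nth j c : (j < size zs)%N -> S c -> right_span zs S (zs`_j * c).
Proof.
move=> lt_j Sc; exists (fun l => if l == j then c else 0); split=> [l|].
  by case: ifP.
rewrite (bigD1 (Ordinal lt_j)) //= eqxx big1 ?addr0 // => l.
by rewrite -val_eqE /= => /negPf ->; rewrite mulr0.
Qed.

End RightSpan.

Lemma GKdim_on_le (S : A -> Prop) : (GKdim_on R S <= GKdim R A)%E.
Proof. by apply: le_ereal_sup => _ [vs _ <-]; exists vs. Qed.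

Lemma GKdim_le_right_span (zs : seq A) (S : A -> Prop) :
  1 \in zs -> (forall w, right_span zs S w) -> (GKdim R A <= GKdim_on R S)%E.
Proof.
move=> zs1 /choice [F FP]; apply: ge_ereal_sup => _ [vs _ <-].
pose ws := flatten [seq [seq F (v * z) j | j <- iota 0 (size zs)] | v <- vs, z <- zs].
have wsS w : w \in ws -> S w.
  move=> /flattenP [_ /allpairsP [[v z] /= [_ _ ->]]] /mapP [j _ ->].
  by case: (FP (v * z)).
have vz v z : v \in vs -> z \in zs -> spanned [seq z' * w | z' <- zs, w <- ws] (v * z).
  move=> vvs zzs; case: (FP (v * z)) => _ ->.
  apply: spanned_sum => j; apply: spanned_mem.
  apply: (allpairs_f (fun z' w => z' * w)); first exact: mem_nth.
  apply/flattenP; exists [seq F (v * z) j | j <- iota 0 (size zs)].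
    exact: (allpairs_f (fun v z => [seq F (v * z) j | j <- iota 0 (size zs)])).
  by apply: map_f; rewrite mem_iota add0n ltn_ord.
apply: le_trans (log_growth_le R (growth_gt0 ws) (growth_le_mul zs1 vz)) _.
by apply: ereal_sup_ubound; exists ws.
Qed.

End GKdimFiniteModule.

(** * The normal form of a generalized Weyl algebra *)

Lemma horner_map_wide (R S : nzRingType) (f : {rmorphism R -> S}) n (p : {poly R}) z :
  (size p <= n)%N -> (map_poly f p).[z] = \sum_(i < n) f p`_i * z ^+ i.
Proof.
move=> le_pn; rewrite (@horner_coef_wide _ n); last first.
  by rewrite (leq_trans _ le_pn) // size_poly.
by apply: eq_bigr => i _; rewrite coef_map.
Qed.

Lemma horner_comp_polyXn (R : nzRingType) (p : {poly R}) z n :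
  (p \Po 'X^n).[z] = p.[z ^+ n].
Proof.
rewrite comp_polyE horner_sum horner_coef; apply: eq_bigr => i _.
by rewrite -mul_polyC hornerCM -exprM hornerXn exprM.
Qed.

Lemma comp_polyXn_eq0 (R : nzRingType) (p : {poly R}) n :
  (0 < n)%N -> (p \Po 'X^n == 0) = (p == 0).
Proof.
move=> n_gt0; apply/eqP/eqP => [p0|->]; last exact: comp_poly0.
apply/polyP => i; have := congr1 (fun q : {poly R} => q`_(i * n)) p0.
by rewrite /= coef_comp_poly_Xn // dvdn_mull // mulnK // !coef0.
Qed.

Lemma mul_polyXn_eq0 (R : nzRingType) (p : {poly R}) n :
  (p * 'X^n == 0) = (p == 0).
Proof.
apply/eqP/eqP => [pX0|->]; last exact: mul0r.
apply/polyP => i; have := congr1 (fun q : {poly R} => q`_(i + n)) pX0.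
by rewrite /= coefMXn ltnNge leq_addl addnK !coef0.
Qed.

Definition gwa_gens (k : fieldType) (D A : algType k) (iota : D -> A) (x y : A)
  (z : A) : Prop := (exists d, z = iota d) \/ z = x \/ z = y.

Lemma gwa_generated (k : fieldType) (D A : algType k) (iota : {lrmorphism D -> A})
    (s s' : D -> D) (a : D) (x y : A) :
  is_GWA iota s s' a x y -> forall z, gen_subalg (gwa_gens iota x y) z.
Proof.
case=> -[xd yd yx xy] univ z; pose G := gwa_gens iota x y.
have Ggen g : G g -> gen_subalg_pred G g.
  by move=> Gg; apply/asboolP; apply: gen_subalg_gen.
have Gd d : gen_subalg_pred G (iota d) by apply: Ggen; rewrite /G; left; exists d.
have Gx : gen_subalg_pred G x by apply: Ggen; rewrite /G; right; left.
have Gy : gen_subalg_pred G y by apply: Ggen; rewrite /G; right; right.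
pose phi d : gen_subalg_type G := GenSubalg (Gd d).
have phi_zmod : zmod_morphism phi by move=> u v; apply: val_inj; rewrite /= raddfB.
have phi_monoid : monoid_morphism phi.
  by split=> [|u v]; apply: val_inj; rewrite /= ?rmorph1 ?rmorphM.
have phi_scalable : scalable phi by move=> c u; apply: val_inj; rewrite /= linearZ.
pose phiL : {lrmorphism D -> gen_subalg_type G} :=
  HB.pack phi (GRing.isZmodMorphism.Build _ _ _ phi_zmod)
    (GRing.isMonoidMorphism.Build _ _ _ phi_monoid)
    (GRing.isScalable.Build _ _ _ _ _ phi_scalable).
have rel : gwa_relations phiL s s' a (GenSubalg Gx) (GenSubalg Gy).
  by split=> [d|d||]; apply: val_inj; rewrite /= ?xd ?yd ?yx ?xy.
have [h [h_iota hx hy _]] := univ _ phiL _ _ rel.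
have [f [_ _ _ f_uniq]] := univ _ iota x y (And4 xd yd yx xy).
pose g : {lrmorphism A -> A} := gen_subalg_valL G \o h.
have g_f : g z = f z.
  apply: f_uniq => [d||]; [exact: (congr1 val (h_iota d))
    |exact: (congr1 val hx)|exact: (congr1 val hy)].
have -> : z = f z by apply: (f_uniq idfun).
by rewrite -g_f; apply/asboolP; apply: (valP (h z)).
Qed.

Section GWAModule.
Variables (k : fieldType) (D : algType k).

(* (p, q) stands for sum_i p_i x^i + sum_i q_i y^(i+1), see gwa_nf below. *)
Definition gwa_module := ({poly D} * {poly D})%type.
HB.instance Definition _ := GRing.Zmodule.on gwa_module.

Definition gwa_scale (c : k) (v : gwa_module) : gwa_module :=
  ((c%:A)%:P * v.1, (c%:A)%:P * v.2).

Fact gwa_scaleA a b v : gwa_scale a (gwa_scale b v) = gwa_scale (a * b) v.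
Proof.
have ab_alg : (a * b)%:A = a%:A * b%:A :> D by rewrite -scalerAl mul1r scalerA.
by rewrite /gwa_scale /= ab_alg polyCM !mulrA.
Qed.
Fact gwa_scale1 : left_id 1 gwa_scale.
Proof. by case=> p q; rewrite /gwa_scale scale1r !mul1r. Qed.
Fact gwa_scaleDr : right_distributive gwa_scale +%R.
Proof. by move=> c u v; rewrite /gwa_scale /= !mulrDr. Qed.
Fact gwa_scaleDl v : {morph gwa_scale^~ v : a b / a + b}.
Proof. by move=> a b; rewrite /gwa_scale scalerDl polyCD !mulrDl. Qed.
HB.instance Definition _ := GRing.Zmodule_isLmodule.Build k gwa_module
  gwa_scaleA gwa_scale1 gwa_scaleDr gwa_scaleDl.

Lemma gwa_moduleP (u v : gwa_module) :
  (forall i, u.1`_i = v.1`_i) -> (forall i, u.2`_i = v.2`_i) -> u = v.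
Proof. by case: u v => [p q] [p' q'] /= E1 E2; congr pair; apply/polyP. Qed.

Lemma gwa_module_sum I r (P : pred I) (F : I -> gwa_module) :
  \sum_(i <- r | P i) F i =
    (\sum_(i <- r | P i) (F i).1, \sum_(i <- r | P i) (F i).2).
Proof. by elim/big_rec3: _ => // i u p q _ ->. Qed.

Lemma coef_gwa_linear1 c (u v : gwa_module) i :
  (c *: u + v).1`_i = c *: u.1`_i + v.1`_i.
Proof. by rewrite coefD coefCM mulr_algl. Qed.
Lemma coef_gwa_linear2 c (u v : gwa_module) i :
  (c *: u + v).2`_i = c *: u.2`_i + v.2`_i.
Proof. by rewrite coefD coefCM mulr_algl. Qed.

(* algType requires 1 != 0, so the algebra structure on linear endomorphisms
   is only declared for this nonzero module. *)
Fact lendo_gwa_oner_neq0 : (1 : lendo gwa_module) != 0.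
Proof.
apply/eqP => /(congr1 (fun f : lendo gwa_module => (f (1, 0)).1)) /= /eqP.
by rewrite oner_eq0.
Qed.
HB.instance Definition _ :=
  GRing.PzSemiRing_isNonZero.Build (lendo gwa_module) lendo_gwa_oner_neq0.
HB.instance Definition _ :=
  GRing.Lmodule_isLalgebra.Build k (lendo gwa_module) (@lendo_scalerAl _ _).
HB.instance Definition _ :=
  GRing.Lalgebra_isAlgebra.Build k (lendo gwa_module) (@lendo_scalerAr _ _).

End GWAModule.

Section GWARepresentation.
Variables (k : fieldType) (D : algType k) (s s' : {lrmorphism D -> D}).
Hypotheses (ss' : cancel s s') (s's : cancel s' s).
Variables (a : D) (a_central : central a).
Local Notation M := (gwa_module D).

(* Left multiplication by d, x and y in the coordinates of gwa_module, using
   x y = s(a) and y x = a. *)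
Definition gwa_mul_d (d : D) (v : M) : M := (d%:P * v.1, d%:P * v.2).
Definition gwa_mul_x (v : M) : M :=
  (\poly_(i < (size v.1).+1) (if i is j.+1 then s v.1`_j else s (v.2`_0 * a)),
   \poly_(i < size v.2) s (v.2`_i.+1 * a)).
Definition gwa_mul_y (v : M) : M :=
  (\poly_(i < size v.1) (s' v.1`_i.+1 * a),
   \poly_(i < (size v.2).+1) (if i is j.+1 then s' v.2`_j else s' v.1`_0)).

Lemma coef_gwa_mul_d1 d v i : (gwa_mul_d d v).1`_i = d * v.1`_i.
Proof. exact: coefCM. Qed.
Lemma coef_gwa_mul_d2 d v i : (gwa_mul_d d v).2`_i = d * v.2`_i.
Proof. exact: coefCM. Qed.
Lemma coef_gwa_mul_x1 v i :
  (gwa_mul_x v).1`_i = if i is j.+1 then s v.1`_j else s (v.2`_0 * a).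
Proof.
rewrite coef_poly; case: ltnP => // le_i; case: i le_i => // j le_j.
by rewrite nth_default ?raddf0.
Qed.
Lemma coef_gwa_mul_x2 v i : (gwa_mul_x v).2`_i = s (v.2`_i.+1 * a).
Proof.
rewrite coef_poly; case: ltnP => // le_i.
by rewrite nth_default ?mul0r ?raddf0 // (leq_trans le_i).
Qed.
Lemma coef_gwa_mul_y1 v i : (gwa_mul_y v).1`_i = s' v.1`_i.+1 * a.
Proof.
rewrite coef_poly; case: ltnP => // le_i.
by rewrite nth_default ?raddf0 ?mul0r // (leq_trans le_i).
Qed.
Lemma coef_gwa_mul_y2 v i :
  (gwa_mul_y v).2`_i = if i is j.+1 then s' v.2`_j else s' v.1`_0.
Proof.
rewrite coef_poly; case: ltnP => // le_i; case: i le_i => // j le_j.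
by rewrite nth_default ?raddf0.
Qed.

Let coef_gwaE := (coef_gwa_linear1, coef_gwa_linear2, coef_gwa_mul_d1,
  coef_gwa_mul_d2, coef_gwa_mul_x1, coef_gwa_mul_x2, coef_gwa_mul_y1,
  coef_gwa_mul_y2).

Fact gwa_mul_d_linear d : linear (gwa_mul_d d).
Proof.
move=> c u v; apply: gwa_moduleP => i; rewrite !coef_gwaE;
by rewrite mulrDr scalerAr.
Qed.
Fact gwa_mul_x_linear : linear gwa_mul_x.
Proof.
move=> c u v; apply: gwa_moduleP => [[|i]|i]; rewrite !coef_gwaE;
by rewrite ?mulrDl -?scalerAl linearP.
Qed.
Fact gwa_mul_y_linear : linear gwa_mul_y.
Proof.
move=> c u v; apply: gwa_moduleP => [i|[|i]]; rewrite !coef_gwaE;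
by rewrite linearP // mulrDl scalerAl.
Qed.

Definition gwa_op_d d := LEndo (gwa_mul_d_linear d).
Definition gwa_op_x := LEndo gwa_mul_x_linear.
Definition gwa_op_y := LEndo gwa_mul_y_linear.

Fact gwa_op_d_is_zmod_morphism : zmod_morphism gwa_op_d.
Proof.
move=> d e; apply: lendoP => v; apply: gwa_moduleP => i /=;
  by rewrite coefB !coefCM mulrBl.
Qed.
Fact gwa_op_d_is_monoid_morphism : monoid_morphism gwa_op_d.
Proof.
split=> [|d e]; apply: lendoP => v; apply: gwa_moduleP => i /=;
by rewrite !coefCM ?mul1r ?mulrA.
Qed.
Fact gwa_op_d_is_scalable : scalable gwa_op_d.
Proof.
move=> c d; apply: lendoP => v; apply: gwa_moduleP => i /=;
  by rewrite !coefCM -!scalerAl mul1r.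
Qed.
Definition gwa_op_dL : {lrmorphism D -> lendo M} :=
  HB.pack gwa_op_d (GRing.isZmodMorphism.Build _ _ _ gwa_op_d_is_zmod_morphism)
    (GRing.isMonoidMorphism.Build _ _ _ gwa_op_d_is_monoid_morphism)
    (GRing.isScalable.Build _ _ _ _ _ gwa_op_d_is_scalable).

Lemma gwa_model_relations : gwa_relations gwa_op_dL s s' a gwa_op_x gwa_op_y.
Proof.
have sa_central : central (s a) by apply: central_rmorph_can s's _ a_central.
split=> [d|d||]; apply: lendoP => v /=.
- by apply: gwa_moduleP => [[|i]|i]; rewrite !coef_gwaE !rmorphM ?mulrA.
- by apply: gwa_moduleP => [i|[|i]]; rewrite !coef_gwaE !rmorphM ?mulrA.
- by apply: gwa_moduleP => [i|[|i]]; rewrite !coef_gwaE ss' a_central.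
- apply: gwa_moduleP => [[|i]|i]; rewrite !coef_gwaE rmorphM sa_central;
  by congr (_ * _); apply: s's.
Qed.

End GWARepresentation.
Arguments gwa_op_dL {k D}.

Section GWANormalForm.
Variables (k : fieldType) (D : algType k) (s s' : {lrmorphism D -> D}).
Hypotheses (ss' : cancel s s') (s's : cancel s' s).
Variables (a : D) (a_central : central a).
Variables (A : algType k) (emb : {lrmorphism D -> A}) (x y : A).
Hypothesis gwaA : is_GWA emb s s' a x y.
Local Notation M := (gwa_module D).

Definition gwa_nf (v : M) : A := (map_poly emb v.1).[x] + (map_poly emb v.2).[y] * y.

Fact gwa_nf_linear : linear gwa_nf.
Proof.
move=> c u v; rewrite /gwa_nf /= !rmorphD !rmorphM /= !map_polyC /= rmorph_alg.
by rewrite !hornerD !hornerCM !mulr_algl mulrDl scalerDr scalerAl addrACA.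
Qed.
HB.instance Definition _ := GRing.isLinear.Build k M A *:%R gwa_nf gwa_nf_linear.

Let xd d : x * emb d = emb (s d) * x. Proof. by case: gwaA => -[]. Qed.
Let yd d : y * emb d = emb (s' d) * y. Proof. by case: gwaA => -[]. Qed.
Let yx : y * x = emb a. Proof. by case: gwaA => -[]. Qed.
Let xy : x * y = emb (s a). Proof. by case: gwaA => -[]. Qed.

Lemma gwa_nf_mul_d d v : gwa_nf (gwa_mul_d d v) = emb d * gwa_nf v.
Proof. by rewrite /gwa_nf /= !rmorphM /= !map_polyC !hornerCM mulrDr mulrA. Qed.

Lemma gwa_nf_wide n1 n2 (v : M) : (size v.1 <= n1)%N -> (size v.2 <= n2)%N ->
  gwa_nf v = \sum_(i < n1) emb v.1`_i * x ^+ i + \sum_(i < n2) emb v.2`_i * y ^+ i.+1.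
Proof.
move=> le1 le2; rewrite /gwa_nf (horner_map_wide _ x le1) (horner_map_wide _ y le2).
by rewrite mulr_suml; congr (_ + _); apply: eq_bigr => i _; rewrite -mulrA -exprSr.
Qed.

Let mul_x_x c i : x * (emb c * x ^+ i) = emb (s c) * x ^+ i.+1.
Proof. by rewrite mulrA xd -mulrA -exprS. Qed.
Let mul_x_y c i : x * (emb c * y ^+ i.+1) = emb (s (c * a)) * y ^+ i.
Proof. by rewrite exprS !mulrA xd -(mulrA _ x) xy -rmorphM -rmorphM. Qed.
Let mul_y_x c i : y * (emb c * x ^+ i.+1) = emb (s' c * a) * x ^+ i.
Proof. by rewrite exprS !mulrA yd -(mulrA _ y) yx -rmorphM. Qed.
Let mul_y_y c i : y * (emb c * y ^+ i.+1) = emb (s' c) * y ^+ i.+2.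
Proof. by rewrite mulrA yd -mulrA -exprS. Qed.

Lemma gwa_nf_mul_x (v : M) : gwa_nf (gwa_mul_x s a v) = x * gwa_nf v.
Proof.
set N := (size v.1 + size v.2)%N.
have le1 : (size v.1 <= N)%N by rewrite leq_addr.
have le2 : (size v.2 <= N)%N by rewrite leq_addl.
have [le1' le2'] : (size (gwa_mul_x s a v).1 <= N.+1)%N /\
                  (size (gwa_mul_x s a v).2 <= N)%N.
  by split; apply: leq_trans (size_poly _ _) _.
rewrite (gwa_nf_wide le1' le2') (gwa_nf_wide le1 (leqW le2)).
rewrite mulrDr !mulr_sumr big_ord_recl [in RHS]big_ord_recl addrCA addrA.
congr (_ + _ + _); last 2 first.
- by apply: eq_bigr => i _; rewrite lift0 coef_gwa_mul_x1 mul_x_x.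
- by apply: eq_bigr => i _; rewrite lift0 coef_gwa_mul_x2 mul_x_y.
by rewrite mul_x_y coef_gwa_mul_x1 !expr0 !mulr1 /=.
Qed.

Lemma gwa_nf_mul_y (v : M) : gwa_nf (gwa_mul_y s' a v) = y * gwa_nf v.
Proof.
set N := (size v.1 + size v.2)%N.
have le1 : (size v.1 <= N)%N by rewrite leq_addr.
have le2 : (size v.2 <= N)%N by rewrite leq_addl.
have [le1' le2'] : (size (gwa_mul_y s' a v).1 <= N)%N /\
                  (size (gwa_mul_y s' a v).2 <= N.+1)%N.
  by split; apply: leq_trans (size_poly _ _) _.
rewrite (gwa_nf_wide le1' le2') (gwa_nf_wide (leqW le1) le2).
rewrite mulrDr !mulr_sumr [in LHS]big_ord_recl [in RHS]big_ord_recl.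
rewrite addrCA addrA.
congr (_ + _ + _); last 2 first.
- by apply: eq_bigr => i _; rewrite lift0 coef_gwa_mul_y1 mul_y_x.
- by apply: eq_bigr => i _; rewrite lift0 coef_gwa_mul_y2 mul_y_y.
by rewrite coef_gwa_mul_y2 expr0 mulr1 expr1 yd /=.
Qed.

Definition gwa_e0 : M := (1, 0).

Lemma gwa_nf_e0 : gwa_nf gwa_e0 = 1.
Proof. by rewrite /gwa_nf /= rmorph1 rmorph0 hornerC horner0 mul0r addr0. Qed.

Lemma gwa_op_x_e0 n : (gwa_op_x s a ^+ n) gwa_e0 = ('X^n, 0).
Proof.
elim: n => [|n IHn]; first by rewrite expr0.
rewrite exprS /= IHn; apply: gwa_moduleP => [[|i]|i];
  by rewrite ?coef_gwa_mul_x1 ?coef_gwa_mul_x2 !coefE ?(mul0r, raddf0, rmorph_nat).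
Qed.

Lemma gwa_op_y_e0 n : (gwa_op_y s' a ^+ n.+1) gwa_e0 = (0, 'X^n).
Proof.
elim: n => [|n IHn]; rewrite exprS /= ?expr0 ?IHn; apply: gwa_moduleP => [i|[|i]];
  rewrite ?coef_gwa_mul_y1 ?coef_gwa_mul_y2 !coefE;
  by rewrite ?(mul0r, raddf0, rmorph1, rmorph_nat).
Qed.

Lemma sum_gwa_op_x_e0 (p : {poly D}) :
  (\sum_(i < size p) gwa_op_dL p`_i * gwa_op_x s a ^+ i) gwa_e0 = (p, 0).
Proof.
rewrite lendo_sumE gwa_module_sum; congr pair.
  rewrite -[RHS]coefK poly_def; apply: eq_bigr => i _.
  by rewrite /= gwa_op_x_e0 mul_polyC.
by rewrite big1 // => i _; rewrite /= gwa_op_x_e0 mulr0.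
Qed.

Lemma sum_gwa_op_y_e0 (q : {poly D}) :
  (\sum_(i < size q) gwa_op_dL q`_i * gwa_op_y s' a ^+ i.+1) gwa_e0 = (0, q).
Proof.
rewrite lendo_sumE gwa_module_sum; congr pair.
  by rewrite big1 // => i _; rewrite /= gwa_op_y_e0 mulr0.
rewrite -[RHS]coefK poly_def; apply: eq_bigr => i _.
by rewrite /= gwa_op_y_e0 mul_polyC.
Qed.

Section Representation.
Variable rho : {lrmorphism A -> lendo M}.
Hypotheses (rho_d : forall d, rho (emb d) = gwa_op_dL d)
  (rho_x : rho x = gwa_op_x s a) (rho_y : rho y = gwa_op_y s' a).

Lemma gwa_nf_rep w v : gwa_nf (rho w v) = w * gwa_nf v.
Proof.
have gen_w := gwa_generated gwaA w; move: v.
apply: (gen_w (fun w => forall v, gwa_nf (rho w v) = w * gwa_nf v)).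
  split=> [v|u1 u2 H1 H2 v|u1 u2 H1 H2 v|c u H v].
  - by rewrite rmorph1 mul1r.
  - by rewrite rmorphD mulrDl -H1 -H2; apply: linearD.
  - by rewrite rmorphM /= H1 H2 mulrA.
  - by rewrite linearZ -scalerAl -H; apply: linearZ.
move=> _ [[d ->]|[->|->]] v.
- by rewrite rho_d gwa_nf_mul_d.
- by rewrite rho_x gwa_nf_mul_x.
- by rewrite rho_y gwa_nf_mul_y.
Qed.

Lemma rep_gwa_nf v : rho (gwa_nf v) gwa_e0 = v.
Proof.
case: v => p q; rewrite (gwa_nf_wide (v := (p, q)) (leqnn _) (leqnn _)).
have rho_x_mono c i : rho (emb c * x ^+ i) = gwa_op_dL c * gwa_op_x s a ^+ i.
  by rewrite rmorphM rmorphXn; congr (_ * _ ^+ _); [exact: rho_d|exact: rho_x].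
have rho_y_mono c i : rho (emb c * y ^+ i) = gwa_op_dL c * gwa_op_y s' a ^+ i.
  by rewrite rmorphM rmorphXn; congr (_ * _ ^+ _); [exact: rho_d|exact: rho_y].
rewrite rmorphD !rmorph_sum /=.
under eq_bigr do rewrite rho_x_mono.
under [in X in _ + X]eq_bigr do rewrite rho_y_mono.
rewrite sum_gwa_op_x_e0 sum_gwa_op_y_e0.
by rewrite -[_ + _]/(p + 0, 0 + q) addr0 add0r.
Qed.

End Representation.

Lemma gwa_nf_bij : bijective gwa_nf.
Proof.
have [rho [rho_d rho_x rho_y _]] :=
  gwaA.2 _ _ _ _ (gwa_model_relations ss' s's a_central).
exists (fun w => rho w gwa_e0) => [v|w]; first exact: rep_gwa_nf.
by rewrite gwa_nf_rep // gwa_nf_e0 mulr1.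
Qed.

End GWANormalForm.
(** * The subalgebra generated by D, x^m and y^m *)

Section IteratedAutomorphism.
Variables (k : fieldType) (D : algType k) (s : {lrmorphism D -> D}).

Lemma iter_rmorphB n : {morph iter n s : u v / u - v}.
Proof. by elim: n => // n IHn u v; rewrite !iterS IHn raddfB. Qed.
Lemma iter_rmorph1 n : iter n s 1 = 1.
Proof. by elim: n => // n IHn; rewrite iterS IHn rmorph1. Qed.
Lemma iter_rmorphM n : {morph iter n s : u v / u * v}.
Proof. by elim: n => // n IHn u v; rewrite !iterS IHn rmorphM. Qed.
Lemma iter_linearZ n c : {morph iter n s : u / c *: u}.
Proof. by elim: n => // n IHn u; rewrite !iterS IHn linearZ. Qed.

Definition iter_lrmorphism n : {lrmorphism D -> D} :=
  HB.pack (iter n s) (GRing.isZmodMorphism.Build _ _ _ (iter_rmorphB n))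
    (GRing.isMonoidMorphism.Build _ _ _ (iter_rmorph1 n, iter_rmorphM n))
    (GRing.isScalable.Build _ _ _ _ _ (@iter_linearZ n)).

End IteratedAutomorphism.

Definition inv_lrmorphism (k : fieldType) (D : algType k) (s : {lrmorphism D -> D})
    (s' : D -> D) (ss' : cancel s s') (s's : cancel s' s) : {lrmorphism D -> D} :=
  HB.pack s' (GRing.isZmodMorphism.Build _ _ _ (can2_zmod_morphism ss' s's))
    (GRing.isMonoidMorphism.Build _ _ _ (can2_monoid_morphism ss' s's))
    (GRing.isScalable.Build _ _ _ _ _ (can2_scalable ss' s's)).

Section GWAPowerRelations.
Variables (k : fieldType) (D : algType k) (s s' : {lrmorphism D -> D}).
Hypotheses (ss' : cancel s s') (s's : cancel s' s).
Variables (a : D) (a_central : central a).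

Definition gwa_pow_param m : D := \prod_(i < m) iter (m.-1 - i) s' a.

Lemma gwa_pow_paramS m : gwa_pow_param m.+1 = iter m s' a * gwa_pow_param m.
Proof.
rewrite /gwa_pow_param big_ord_recl subn0; congr (_ * _).
by apply: eq_bigr => i _; rewrite lift0; congr (iter _ _ _); lia.
Qed.

Lemma central_iter (f : {rmorphism D -> D}) g n z :
  cancel g f -> central z -> central (iter n f z).
Proof. by move=> gK zC; elim: n => // n IHn; apply: central_rmorph_can gK _ IHn. Qed.

Lemma gwa_pow_param_central m : central (gwa_pow_param m).
Proof.
rewrite /gwa_pow_param; apply: (big_ind (@central D)) => [d|u v uC vC d|i _];
  last exact: central_iter ss' a_central.
  by rewrite /GRing.comm mul1r mulr1.
by rewrite /GRing.comm -mulrA vC mulrA uC mulrA.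
Qed.

Variables (A : algType k) (emb : {lrmorphism D -> A}) (x y : A).
Hypothesis gwaA : is_GWA emb s s' a x y.

Lemma gwa_relations_pow m :
  gwa_relations emb (iter m s) (iter m s') (gwa_pow_param m) (x ^+ m) (y ^+ m).
Proof.
have [[xd yd yx xy] _] := gwaA.
have xn_emb n d : x ^+ n * emb d = emb (iter n s d) * x ^+ n.
  elim: n d => [|n IHn] d; first by rewrite mul1r mulr1.
  by rewrite exprS -mulrA IHn mulrA xd -mulrA -exprS.
have yn_emb n d : y ^+ n * emb d = emb (iter n s' d) * y ^+ n.
  elim: n d => [|n IHn] d; first by rewrite mul1r mulr1.
  by rewrite exprS -mulrA IHn mulrA yd -mulrA -exprS.
have param0 : gwa_pow_param 0 = 1 by rewrite /gwa_pow_param big_ord0.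
split=> //; elim: m => [|m IHm]; rewrite ?mulr1 ?param0 ?rmorph1 //.
  rewrite exprSr exprS -mulrA (mulrA y) yx mulrA yn_emb -mulrA IHm -rmorphM.
  by rewrite gwa_pow_paramS.
rewrite exprS exprSr -mulrA (mulrA (x ^+ m)) IHm mulrA xd -mulrA xy.
rewrite gwa_pow_paramS iter_rmorphM /= (iter_can m s's) -rmorphM.
by rewrite (central_rmorph_can s's a_central).
Qed.

End GWAPowerRelations.

Section GWAPowerSubalgebra.
Variables (k : fieldType) (D : algType k) (s s' : {lrmorphism D -> D}).
Hypotheses (ss' : cancel s s') (s's : cancel s' s).
Variables (a : D) (a_central : central a).
Variables (A : algType k) (emb : {lrmorphism D -> A}) (x y : A).
Hypothesis gwaA : is_GWA emb s s' a x y.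
Variables (m : nat) (m_gt0 : (0 < m)%N).
Variables (A' : algType k) (emb' : {lrmorphism D -> A'}) (X Y : A').
Hypothesis gwaA' : is_GWA emb' (iter_lrmorphism s m) (iter_lrmorphism s' m)
  (gwa_pow_param s' a m) X Y.
Variable f : {lrmorphism A' -> A}.
Hypotheses (f_emb : forall d, f (emb' d) = emb d)
  (fX : f X = x ^+ m) (fY : f Y = y ^+ m).

Definition gwa_spread (v : gwa_module D) : gwa_module D :=
  (v.1 \Po 'X^m, (v.2 \Po 'X^m) * 'X^(m.-1)).

Lemma gwa_nf_pow v : f (gwa_nf emb' X Y v) = gwa_nf emb x y (gwa_spread v).
Proof.
have f_mono c i (Z : A') (z : A) : f Z = z -> f (emb' c * Z ^+ i) = emb c * z ^+ i.
  by move=> fZ; rewrite rmorphM rmorphXn; congr (_ * _ ^+ _); [exact: f_emb|exact: fZ].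
case: v => p q.
rewrite (gwa_nf_wide emb' X Y (v := (p, q)) (leqnn _) (leqnn _)) rmorphD.
rewrite !rmorph_sum /gwa_nf /= rmorphM /= !map_comp_poly !map_polyXn.
rewrite hornerM_comm; last by rewrite /comm_poly hornerXn commrX.
rewrite !horner_comp_polyXn hornerXn -mulrA -exprSr prednK //.
rewrite !(horner_map_wide _ _ (leqnn _)) mulr_suml; congr (_ + _).
  by apply: eq_bigr => i _; apply: f_mono.
by apply: eq_bigr => i _; rewrite (f_mono _ _ _ _ fY) -mulrA -exprSr.
Qed.

Lemma gwa_pow_map_injective : injective f.
Proof.
have b_central := gwa_pow_param_central ss' a_central m.
have ss'm : cancel (iter_lrmorphism s m) (iter_lrmorphism s' m) := iter_can m ss'.
have s'sm : cancel (iter_lrmorphism s' m) (iter_lrmorphism s m) := iter_can m s's.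
have [nf' _ nf'K] := gwa_nf_bij ss'm s'sm b_central gwaA'.
have nf_inj := bij_inj (gwa_nf_bij ss' s's a_central gwaA).
apply: raddf_inj => w fw0; rewrite -[w]nf'K.
have : f (gwa_nf emb' X Y (nf' w)) = 0 by rewrite nf'K.
rewrite gwa_nf_pow -(linear0 (gwa_nf emb x y)) => /nf_inj.
case: (nf' w) => p q [/eqP]; rewrite comp_polyXn_eq0 // => /eqP ->.
by move/eqP; rewrite mul_polyXn_eq0 comp_polyXn_eq0 // => /eqP ->; apply: linear0.
Qed.

End GWAPowerSubalgebra.

Section GWAFiniteOverPowers.
Variables (k : fieldType) (D : algType k) (s s' : {lrmorphism D -> D}).
Hypotheses (ss' : cancel s s') (s's : cancel s' s).
Variables (a : D) (a_central : central a).
Variables (A : algType k) (emb : {lrmorphism D -> A}) (x y : A).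
Hypothesis gwaA : is_GWA emb s s' a x y.
Variables (m : nat) (m_gt0 : (0 < m)%N).

Definition gwa_pow_basis : seq A := mkseq (GRing.exp x) m ++ mkseq (GRing.exp y) m.

Lemma skew_expr_split (z : A) (t t' : D -> D) n d :
  (forall r e, z ^+ r * emb e = emb (iter r t e) * z ^+ r) -> cancel t' t ->
  emb d * z ^+ n = z ^+ (n %% m) * (emb (iter (n %% m) t' d) * (z ^+ m) ^+ (n %/ m)).
Proof.
move=> zrel t'K; rewrite mulrA zrel (iter_can _ t'K) -mulrA -exprM -exprD.
by rewrite addnC mulnC -divn_eq.
Qed.

Lemma gwa_right_span_pow (S : A -> Prop) : Defs.subalg_closed S ->
  (forall d, S (emb d)) -> S (x ^+ m) -> S (y ^+ m) ->
  forall w, right_span gwa_pow_basis S w.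
Proof.
move=> S_closed Semb Sx Sy; have [S1 _ SM _] := S_closed.
have SX u n : S u -> S (u ^+ n) by move=> Su; elim: n => [|n IHn]; rewrite ?exprS; auto.
have size_basis : size gwa_pow_basis = (m + m)%N by rewrite size_cat !size_mkseq.
have xrel r e : x ^+ r * emb e = emb (iter r s e) * x ^+ r.
  by case: (gwa_relations_pow s's a_central gwaA r).
have yrel r e : y ^+ r * emb e = emb (iter r s' e) * y ^+ r.
  by case: (gwa_relations_pow s's a_central gwaA r).
have lt_mod n : (n %% m < m)%N by rewrite ltn_pmod.
have [nf _ nfK] := gwa_nf_bij ss' s's a_central gwaA.
move=> w; rewrite -[w]nfK; case: (nf w) => p q.
rewrite (gwa_nf_wide emb x y (v := (p, q)) (leqnn _) (leqnn _)).
apply: right_spanD => //; apply: right_span_sum => // i.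
  rewrite (skew_expr_split _ _ xrel s's).
  have -> : x ^+ (i %% m) = gwa_pow_basis`_(i %% m).
    by rewrite nth_cat size_mkseq lt_mod nth_mkseq.
  apply: right_span_nth => //; first by rewrite size_basis ltn_addr.
  by apply: SM; [apply: Semb | apply: SX].
rewrite (skew_expr_split _ _ yrel ss').
have -> : y ^+ (i.+1 %% m) = gwa_pow_basis`_(m + i.+1 %% m).
  by rewrite nth_cat size_mkseq ltnNge leq_addr /= addKn nth_mkseq.
apply: right_span_nth => //; first by rewrite size_basis ltn_add2l.
by apply: SM; [apply: Semb | apply: SX].
Qed.

End GWAFiniteOverPowers.

Theorem lemma3p1 (k : fieldType) (D : algType k)
    (sigma : {lrmorphism D -> D}) (sigmainv : D -> D)
    (Hs1 : cancel sigma sigmainv) (Hs2 : cancel sigmainv sigma)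
    (a : D) (Ha : forall d : D, a * d = d * a)
    (A : algType k) (iota : {lrmorphism D -> A}) (x y : A)
    (HA : is_GWA iota sigma sigmainv a x y)
    (m : nat) (Hm : (1 <= m)%N)
    (A' : algType k) (iota' : {lrmorphism D -> A'}) (X Y : A')
    (HA' : is_GWA iota' (iter m sigma) (iter m sigmainv)
             (\prod_(i < m) iter (m.-1 - i) sigmainv a) X Y)
    (R : realType) :
  let b := \prod_(i < m) iter (m.-1 - i) sigmainv a in
  let B := gen_subalg (fun z : A => (exists d, z = iota d) \/ z = x ^+ m \/ z = y ^+ m) in
  [/\ forall d : D, b * d = d * b,
      exists f : {lrmorphism A' -> A},
        [/\ forall d, f (iota' d) = iota d, f X = x ^+ m, f Y = y ^+ m,
            injective f &
            forall z, B z <-> exists w, f w = z]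
    & GKdim R A = GKdim_on R B].
Proof.
move=> b B; pose s' := inv_lrmorphism Hs1 Hs2.
have ss' : cancel sigma s' := Hs1.
have s's : cancel s' sigma := Hs2.
have gwaA : is_GWA iota sigma s' a x y := HA.
have gwaA' : is_GWA iota' (iter_lrmorphism sigma m) (iter_lrmorphism s' m)
  (gwa_pow_param s' a m) X Y := HA'.
have [f [f_iota fX fY _]] := HA'.2 A iota _ _ (gwa_relations_pow s's Ha gwaA m).
have f_inj : injective f := gwa_pow_map_injective ss' s's Ha gwaA Hm gwaA' f_iota fX fY.
have B_f : forall z, B z <-> exists w, f w = z.
  apply: gen_subalg_lrmorph_image (gwa_generated HA') _ _.
    by move=> _ [[d ->]|[->|->]]; [left; exists d|right; left|right; right].
  by move=> _ [[d ->]|[->|->]]; [exists (iota' d)|exists X|exists Y].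
split; [exact (gwa_pow_param_central ss' Ha m)|by exists f|].
apply/eqP; rewrite eq_le GKdim_on_le andbT.
apply: (@GKdim_le_right_span _ _ _ (gwa_pow_basis x y m)).
  by rewrite mem_cat -(expr0 x) map_f ?mem_iota.
apply: (gwa_right_span_pow ss' s's Ha gwaA Hm (gen_subalg_closed _)) => [d||];
  apply: gen_subalg_gen; [by left; exists d|by right; left|by right; right].
Qed.
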